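(* Let $\lambda_0\in(0,1/2)$ and let $\nu$ be uniformly distributed on $[0,\pi]$, $n_1=\cos\nu$. Then $$E\left[|n_1|\arctan\left(\frac{4\lambda_0|n_1|}{4\lambda_0^2-1}\right)\right]=-2\lambda_0.$$
   Context: $\arctan$ denotes the principal branch with values in $(-\pi/2,\pi/2)$. *)

From Stdlib Require Import Reals.
From Coquelicot Require Import Coquelicot.
Open Scope R_scope.

Definition uniform_0_pi_expect (g : R -> R) : R := RInt g 0 PI / PI.

(** Integrating by parts, [cos y * atan (c cos y)] has primitive
    [sin y * atan (c cos y)] up to the integral of [c sin^2 y / (1 + c^2 cos^2 y)].
    Writing [c^2 = k^2 + 2k] with [k = sqrt (1 + c^2) - 1], the latter integrand is
    [(k - D y) / c] where [D] is the derivative of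
    [(1 + k) atan (k sin y cos y / (1 + k cos^2 y))], a function vanishing at [0] and
    [PI]; hence the integral over [[0, PI]] is [PI (sqrt (1 + c^2) - 1) / c].
    For [c = 4 lambda0 / (4 lambda0^2 - 1)] one finds
    [sqrt (1 + c^2) - 1 = 8 lambda0^2 / (1 - 4 lambda0^2)], and the absolute values
    disappear because [x * atan (c x)] is even. *)
From Stdlib Require Import Reals Lra.
From Coquelicot Require Import Coquelicot.
Open Scope R_scope.

Lemma Rabs_mul_atan_Rabs (c x : R) : Rabs x * atan (c * Rabs x) = x * atan (c * x).
Proof.
destruct (Rcase_abs x) as [Hx | Hx].
- rewrite Rabs_left by lra.
  replace (c * - x) with (- (c * x)) by ring.
  rewrite atan_opp; ring.
- rewrite Rabs_right by lra; reflexivity.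
Qed.

Lemma is_derive_sin_atan_cos (c x : R) :
  is_derive (fun y => sin y * atan (c * cos y)) x
    (cos x * atan (c * cos x) - c * sin x ^ 2 / (1 + c ^ 2 * cos x ^ 2)).
Proof.
auto_derive; [exact I |].
field. nra.
Qed.

Lemma is_derive_atan_sin_cos_quot (k x : R) : 0 <= k ->
  is_derive (fun y => (1 + k) * atan (k * sin y * cos y / (1 + k * cos y ^ 2))) x
    (k - (k ^ 2 + 2 * k) * sin x ^ 2 / (1 + (k ^ 2 + 2 * k) * cos x ^ 2)).
Proof.
intros Hk.
assert (HC2 : 0 <= cos x ^ 2) by apply pow2_ge_0.
assert (HS2 : sin x ^ 2 = 1 - cos x ^ 2)
  by (rewrite <- (sin2_cos2 x); unfold Rsqr; ring).
auto_derive; [nra |].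
assert (HE : 0 < 1 + (k ^ 2 + 2 * k) * cos x ^ 2) by nra.
assert (Hden : (1 + k * cos x ^ 2) ^ 2 + k ^ 2 * cos x ^ 2 * sin x ^ 2
               = 1 + (k ^ 2 + 2 * k) * cos x ^ 2)
  by (rewrite HS2; ring).
transitivity ((1 + k) * k * ((cos x ^ 2 - sin x ^ 2) * (1 + k * cos x ^ 2)
                             + 2 * k * sin x ^ 2 * cos x ^ 2)
              / ((1 + k * cos x ^ 2) ^ 2 + k ^ 2 * cos x ^ 2 * sin x ^ 2)).
{ field. split; nra. }
rewrite Hden. field_simplify_eq; [| lra]. rewrite HS2. ring.
Qed.

Definition cos_atan_cos_primitive (c k y : R) : R :=
  sin y * atan (c * cos y)
  + (k * y - (1 + k) * atan (k * sin y * cos y / (1 + k * cos y ^ 2))) / c.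

Lemma is_derive_cos_atan_cos_primitive (c k x : R) :
  0 <= k -> c ^ 2 = k ^ 2 + 2 * k -> c <> 0 ->
  is_derive (cos_atan_cos_primitive c k) x (cos x * atan (c * cos x)).
Proof.
intros Hk Hck Hc.
assert (Hlin : is_derive (fun y => k * y) x k).
{ auto_derive; [exact I | ring]. }
assert (Hsum := is_derive_plus _ _ x _ _ (is_derive_sin_atan_cos c x)
  (is_derive_scal _ x (/ c) _
     (is_derive_minus _ _ x _ _ Hlin (is_derive_atan_sin_cos_quot k x Hk)))).
replace (cos x * atan (c * cos x)) with (plus
    (cos x * atan (c * cos x) - c * sin x ^ 2 / (1 + c ^ 2 * cos x ^ 2))
    (scal (/ c) (minus k
       (k - (k ^ 2 + 2 * k) * sin x ^ 2 / (1 + (k ^ 2 + 2 * k) * cos x ^ 2))))).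
- refine (is_derive_ext _ _ _ _ _ Hsum). intro y.
  unfold cos_atan_cos_primitive, minus, plus, opp, scal; simpl.
  unfold mult; simpl. field. exact Hc.
- unfold minus, plus, opp, scal; cbn -[pow]. unfold mult; cbn -[pow].
  rewrite <- Hck. field. split; [| exact Hc].
  assert (0 <= (c * cos x) ^ 2) by apply pow2_ge_0. lra.
Qed.

Lemma is_RInt_cos_atan_cos (c k : R) :
  0 <= k -> c ^ 2 = k ^ 2 + 2 * k -> c <> 0 ->
  is_RInt (fun y => cos y * atan (c * cos y)) 0 PI (PI * k / c).
Proof.
intros Hk Hck Hc.
replace (PI * k / c)
  with (minus (cos_atan_cos_primitive c k PI) (cos_atan_cos_primitive c k 0)).
- apply (is_RInt_derive (cos_atan_cos_primitive c k) (fun y => cos y * atan (c * cos y))).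
  + intros x _. now apply is_derive_cos_atan_cos_primitive.
  + intros x _. apply (@ex_derive_continuous R_AbsRing R_NormedModule).
    auto_derive. exact I.
- unfold cos_atan_cos_primitive, minus, plus, opp; simpl.
  rewrite sin_PI, cos_PI, sin_0, cos_0.
  unfold Rdiv. rewrite !Rmult_0_r, !Rmult_0_l, atan_0. field. exact Hc.
Qed.

Lemma RInt_cos_atan_cos (c : R) :
  RInt (fun y => cos y * atan (c * cos y)) 0 PI = PI * (sqrt (1 + c ^ 2) - 1) / c.
Proof.
destruct (Req_dec c 0) as [-> | Hc].
- rewrite (RInt_ext _ (fun _ => 0)), RInt_const.
  + rewrite pow_i, Rplus_0_r, sqrt_1 by auto.
    unfold scal; simpl; unfold mult; simpl. unfold Rdiv; ring.
  + intros x _. rewrite Rmult_0_l, atan_0. apply Rmult_0_r.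
- set (k := sqrt (1 + c ^ 2) - 1).
  assert (Hc2 : 0 <= c ^ 2) by apply pow2_ge_0.
  assert (Hk : 0 <= k).
  { unfold k. rewrite <- sqrt_1 at 2.
    assert (sqrt 1 <= sqrt (1 + c ^ 2)) by (apply sqrt_le_1_alt; lra).
    lra. }
  assert (Hck : c ^ 2 = k ^ 2 + 2 * k).
  { unfold k. replace ((sqrt (1 + c ^ 2) - 1) ^ 2 + 2 * (sqrt (1 + c ^ 2) - 1))
      with (sqrt (1 + c ^ 2) * sqrt (1 + c ^ 2) - 1) by ring.
    rewrite sqrt_sqrt by lra. ring. }
  apply is_RInt_unique, is_RInt_cos_atan_cos; assumption.
Qed.

Theorem lemma8 (lambda0 : R) (h0 : 0 < lambda0) (h1 : lambda0 < 1/2) :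
  uniform_0_pi_expect
    (fun nu => Rabs (cos nu) *
               atan (4 * lambda0 * Rabs (cos nu) / (4 * lambda0 ^ 2 - 1)))
  = -2 * lambda0.
Proof.
set (c := 4 * lambda0 / (4 * lambda0 ^ 2 - 1)).
assert (Hden : 0 < 1 - 4 * lambda0 ^ 2) by nra.
assert (Hsqrt : sqrt (1 + c ^ 2) = (1 + 4 * lambda0 ^ 2) / (1 - 4 * lambda0 ^ 2)).
{ rewrite <- (sqrt_pow2 ((1 + 4 * lambda0 ^ 2) / (1 - 4 * lambda0 ^ 2))).
  - f_equal. unfold c. field. lra.
  - apply Rlt_le, Rdiv_lt_0_compat; nra. }
unfold uniform_0_pi_expect.
rewrite (RInt_ext _ (fun nu => cos nu * atan (c * cos nu))).
- rewrite RInt_cos_atan_cos, Hsqrt. unfold c.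
  field. pose proof PI_RGT_0. repeat split; nra.
- intros nu _. rewrite <- Rabs_mul_atan_Rabs.
  unfold c, Rdiv. apply Rmult_eq_compat_l; f_equal; ring.
Qed.
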